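(* Let $\eta: V\to\omega\times\omega$, written $\eta(x)=(\eta_1(x),\eta_2(x))$, be such that $\eta_2$ is unbounded on $A_1$ and unbounded on each set $\{i\}\times\omega\subseteq A_2$, $i\in\omega$. Then there is no homomorphism $G_\eta\to G^1$.
   Context: Graphs are simple and loopless; homomorphisms are edge-preserving vertex maps. $G^1$ is the graph with vertex set $\omega\times\{0,1\}$ whose edges are all pairs $\{(n,i),(m,i)\}$ with $n\ne m$, $i\in\{0,1\}$, $\lfloor\sqrt n\rfloor=\lfloor\sqrt m\rfloor$, together with all pairs $\{(n,0),(m,1)\}$ with $n<m$. Fix finite graphs $G_{j,i}$ ($i,j\in\omega$), each with at least one vertex, such that $\chi(G_{j,i})\ge i$ and $G_{j,i}$ contains no odd cycle of length $\le j$. Let $T$ be the tree with vertex set $V=A_0\cup A_1\cup A_2$, $A_0=\{r\}$, $A_1=\omega$, $A_2=\omega\times\omega$, and edge set $E$ consisting of all pairs $\{r,i\}$ ($i\in\omega$) and $\{i,(i,j)\}$ ($i,j\in\omega$). For $\eta:V\to\omega\times\omega$, $G_\eta$ is the graph obtained by taking, for each $x\in V$, a vertex-disjoint copy $G^x$ of $G_{\eta(x)}$, and adding all edges $\{a,b\}$ with $a\in V(G^x)$, $b\in V(G^y)$ whenever $\{x,y\}\in E$. *)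

From mathcomp Require Import all_boot.
From Stdlib Require Import PeanoNat.
Set Implicit Arguments. Unset Strict Implicit. Unset Printing Implicit Defensive.

Definition chi_ge (T : finType) (e : rel T) (i : nat) : Prop :=
  forall k, k < i ->
    ~ (exists c : T -> nat, (forall v, c v < k) /\ (forall u v, e u v -> c u <> c v)).

Definition is_cycle (T : finType) (e : rel T) (L : nat) (c : nat -> T) : Prop :=
  3 <= L /\
  (forall s t, s < L -> t < L -> c s = c t -> s = t) /\
  (forall t, t < L -> e (c t) (c ((t.+1) %% L))).

Definition no_short_odd_cycle (T : finType) (e : rel T) (j : nat) : Prop :=
  forall L (c : nat -> T), odd L -> L <= j -> ~ is_cycle e L c.

(* ---- the graph G^1 on omega x {0,1}  (false = 0, true = 1) ---- *)
Definition G1_edge (p q : nat * bool) : Prop :=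
  (p.2 = q.2 /\ p.1 <> q.1 /\ Nat.sqrt p.1 = Nat.sqrt q.1)
  \/ (p.2 = false /\ q.2 = true /\ p.1 < q.1)
  \/ (p.2 = true /\ q.2 = false /\ q.1 < p.1).

(* ---- the tree T: V = {r} u omega u omega x omega ---- *)
Inductive TV : Type :=
| Vr : TV
| V1 : nat -> TV
| V2 : nat -> nat -> TV.

Definition tedge (x y : TV) : Prop :=
  match x, y with
  | Vr, V1 _ => True
  | V1 _, Vr => True
  | V1 i, V2 i' _ => i = i'
  | V2 i' _, V1 i => i = i'
  | _, _ => False
  end.

Section Geta.
Variable GT : nat -> nat -> finType.
Variable Ge : forall j i, rel (GT j i).
Variable eta : TV -> nat * nat.

Definition Geta_vert : Type := {x : TV & GT (eta x).1 (eta x).2}.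

Definition Geta_edge (u v : Geta_vert) : Prop :=
  (exists x (a b : GT (eta x).1 (eta x).2),
      u = existT _ x a /\ v = existT _ x b /\ Ge a b)
  \/ tedge (projT1 u) (projT1 v).
End Geta.

(* A homomorphism into G^1 must send a copy of a graph with chromatic number
   above 2N somewhere with first coordinate at least N: otherwise, G^1 being
   loopless, p |-> 2 p.1 + p.2 would properly colour it with 2N colours.  An
   edge of G^1 can only leave the level block of its tail (into values at
   least (n+1)^2) when it goes from side 0 to side 1.  Following the root r,
   a suitable i in A_1 and a suitable (i, j) in A_2 therefore forces a vertex
   over i to lie both on side 1 and on side 0. *)
From Stdlib Require Import PeanoNat Lia.
From mathcomp Require Import all_boot zify.

Lemma sqrt_eq_lt_sqr m n : Nat.sqrt m = Nat.sqrt n -> m < n.+1 ^ 2.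
Proof.
move=> Esqrt.
have [_ lt_m] := Nat.sqrt_spec m (Nat.le_0_l m).
have le_sqrt := Nat.sqrt_le_lin n.
rewrite Esqrt in lt_m.
have : S (Nat.sqrt n) * S (Nat.sqrt n) <= S n * S n by nia.
by move/ltP: lt_m; lia.
Qed.

Lemma G1_edge_irrefl p : ~ G1_edge p p.
Proof. by case: p => n s; rewrite /G1_edge /=; lia. Qed.

Lemma G1_edge_lt_sqr {p q} :
  G1_edge p q -> q.1 < p.1.+1 ^ 2 \/ (p.2 = false /\ q.2 = true).
Proof.
case: p q => [n s] [m t]; rewrite /G1_edge /=.
case=> [[_ [_ Esqrt]] | [[-> [-> _]] | [_ [_ lt_mn]]]].
- by left; apply: sqrt_eq_lt_sqr.
- by right.
- by left; lia.
Qed.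

Definition G1_code (p : nat * bool) : nat := 2 * p.1 + p.2.

Lemma G1_code_inj : injective G1_code.
Proof. by case=> [m [|]] [n [|]]; rewrite /G1_code /= => E; congr pair; lia. Qed.

Lemma G1_code_lt N p : p.1 < N -> G1_code p < 2 * N.
Proof. by case: p => n [|]; rewrite /G1_code /=; lia. Qed.

Lemma G1_hom_unbounded {T : finType} {e : rel T} {g : T -> nat * bool} {k N} :
  chi_ge e k -> 2 * N < k ->
  (forall u v, e u v -> G1_edge (g u) (g v)) ->
  exists a, N <= (g a).1.
Proof.
move=> chi_k lt_Nk hom_g.
case: (boolP [exists a, N <= (g a).1]) => [/existsP // | /existsPn small].
exfalso; apply: (chi_k _ lt_Nk).
exists (G1_code \o g); split=> [a | u v e_uv /= /G1_code_inj Eg].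
  by apply: G1_code_lt; rewrite ltnNge small.
by apply: (@G1_edge_irrefl (g u)); rewrite {2}Eg; apply: hom_g.
Qed.

Section HomToG1.

Variables (GT : nat -> nat -> finType) (Ge : forall j i, rel (GT j i)).
Variable eta : TV -> nat * nat.
Hypothesis Hchi : forall j i, chi_ge (Ge j i) i.
Variable f : Geta_vert GT eta -> nat * bool.
Hypothesis hom_f : forall u v, Geta_edge Ge u v -> G1_edge (f u) (f v).

Lemma Geta_hom_copy x : forall a b : GT (eta x).1 (eta x).2,
  Ge _ _ a b -> G1_edge (f (existT _ x a)) (f (existT _ x b)).
Proof. by move=> a b e_ab; apply: hom_f; left; exists x, a, b. Qed.

Lemma Geta_hom_tree_edge (x y : TV) (a : GT (eta x).1 (eta x).2) :
  tedge x y -> 2 * (f (existT _ x a)).1.+1 ^ 2 < (eta y).2 ->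
  (f (existT _ x a)).2 = false /\ exists b, (f (existT _ y b)).2 = true.
Proof.
move=> xy large_y.
have [b big_b] := G1_hom_unbounded (Hchi _ _) large_y (@Geta_hom_copy y).
have xa_yb : Geta_edge Ge (existT _ x a) (existT _ y b) by right.
have [|[-> b_true]] := G1_edge_lt_sqr (hom_f _ _ xa_yb).
  by rewrite ltnNge big_b.
by split; last exists b.
Qed.

End HomToG1.

Theorem claim4
  (GT : nat -> nat -> finType) (Ge : forall j i, rel (GT j i))
  (Hsym : forall j i, symmetric (Ge j i))
  (Hirr : forall j i, irreflexive (Ge j i))
  (Hne : forall j i, 0 < #|GT j i|)
  (Hchi : forall j i, chi_ge (Ge j i) i)
  (Hodd : forall j i, no_short_odd_cycle (Ge j i) j)
  (eta : TV -> nat * nat)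
  (Hub1 : forall b, exists i, b < (eta (V1 i)).2)
  (Hub2 : forall i b, exists j, b < (eta (V2 i j)).2) :
  ~ exists f : Geta_vert GT eta -> nat * bool,
      forall u v, Geta_edge Ge u v -> G1_edge (f u) (f v).
Proof.
case=> f hom_f.
have tree_step := @Geta_hom_tree_edge _ _ _ Hchi f hom_f.
case/card_gt0P: (Hne (eta Vr).1 (eta Vr).2) => a _.
have [i large_i] := Hub1 (2 * (f (existT _ Vr a)).1.+1 ^ 2).
have [_ [b b_true]] := tree_step Vr (V1 i) a I large_i.
have [j large_j] := Hub2 i (2 * (f (existT _ (V1 i) b)).1.+1 ^ 2).
have [b_false _] := tree_step (V1 i) (V2 i j) b erefl large_j.
by rewrite b_true in b_false.
Qed.
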